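(* Let $U$ and $W$ be two normalized graphons. Then $d_{\mathrm{LP}}(D_U,D_W)\le\sqrt{2\,\delta_\square(U,W)}$.
   Context: A graphon over $(\Omega,\mathcal F,\pi)$ is a measurable symmetric $W:\Omega\times\Omega\to[0,\infty)$ with $\int W<\infty$; it is normalized if $\int W\,d\pi\,d\pi=1$. Its degrees are the random variable $W_x=\int_\Omega W(x,y)\,d\pi(y)$ with $x\sim\pi$, with distribution function $D_W(\lambda)=\pi(\{x:W_x\le\lambda\})$. The Lévy–Prokhorov distance between distribution functions is $d_{\mathrm{LP}}(D,D')=\inf\{\varepsilon>0:D'(\lambda-\varepsilon)-\varepsilon\le D(\lambda)\le D'(\lambda+\varepsilon)+\varepsilon\ \text{for all }\lambda\in\mathbb R\}$. For graphons $W$ on $(\Omega,\pi)$ and $W'$ on $(\Omega',\pi')$, $\delta_\square(W,W')=\inf_\nu\sup_{S,T}|\int_{S\times T}(W(x,y)-W'(x',y'))\,d\nu(x,x')\,d\nu(y,y')|$, the infimum over couplings $\nu$ of $\pi,\pi'$ and supremum over measurable $S,T\subseteq\Omega\times\Omega'$. *)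

From HB Require Import structures.
From mathcomp Require Import all_boot all_order all_algebra.
From mathcomp Require Import all_classical all_reals all_analysis.
Set Implicit Arguments. Unset Strict Implicit. Unset Printing Implicit Defensive.
Import Order.TTheory GRing.Theory Num.Theory.
Local Open Scope classical_set_scope.
Local Open Scope ring_scope.

Section Graphons.
Context {R : realType}.

Definition graphon {d} {T : measurableType d} (P : probability T R)
  (W : T -> T -> R) : Prop :=
  [/\ measurable_fun setT (fun p : T * T => W p.1 p.2),
      (forall x y, W x y = W y x),
      (forall x y, 0 <= W x y) &
      (P \x P)%E.-integrable setT (fun p : T * T => (W p.1 p.2)%:E)].

Definition normalized {d} {T : measurableType d} (P : probability T R)
  (W : T -> T -> R) : Prop :=
  (\int[(P \x P)%E]_p (W p.1 p.2)%:E = 1)%E.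

Definition degree {d} {T : measurableType d} (P : probability T R)
  (W : T -> T -> R) (x : T) : R :=
  fine (\int[P]_y (W x y)%:E)%E.

Definition degree_dist {d} {T : measurableType d} (P : probability T R)
  (W : T -> T -> R) (lam : R) : R :=
  fine (P [set x | degree P W x <= lam]).

Definition d_LP (D D' : R -> R) : R :=
  inf [set eps : R | 0 < eps /\
        forall lam : R, D' (lam - eps) - eps <= D lam /\
                        D lam <= D' (lam + eps) + eps].

Definition coupling {d d'} {T : measurableType d} {T' : measurableType d'}
  (P : probability T R) (P' : probability T' R)
  (nu : probability (T * T')%type R) : Prop :=
  (forall A : set T, measurable A -> nu (A `*` setT) = P A) /\
  (forall B : set T', measurable B -> nu (setT `*` B) = P' B).

Definition cut_sup {d d'} {T : measurableType d} {T' : measurableType d'}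
  (nu : probability (T * T')%type R) (W : T -> T -> R) (W' : T' -> T' -> R)
  : \bar R :=
  ereal_sup [set e : \bar R | exists S S' : set (T * T'),
     [/\ measurable S, measurable S' &
       e = `| \int[(nu \x nu)%E]_(z in S `*` S')
                ((W z.1.1 z.2.1 - W' z.1.2 z.2.2)%:E) |%E]].

(** cut distance delta_square(W, W'): infimum over couplings. It is finite
    for graphons; we take its real value. *)
Definition cut_dist {d d'} {T : measurableType d} {T' : measurableType d'}
  (P : probability T R) (P' : probability T' R)
  (W : T -> T -> R) (W' : T' -> T' -> R) : R :=
  fine (ereal_inf [set e : \bar R | exists nu : probability (T * T')%type R,
                      coupling P P' nu /\ e = cut_sup nu W W']).

End Graphons.

From HB Require Import structures.
From mathcomp Require Import all_boot all_order all_algebra.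
From mathcomp Require Import all_classical all_reals all_analysis.
From mathcomp Require Import measurable_realfun lra.
Set Implicit Arguments. Unset Strict Implicit. Unset Printing Implicit Defensive.
Import Order.TTheory GRing.Theory Num.Theory.
Local Open Scope classical_set_scope.
Local Open Scope ring_scope.
Local Open Scope ereal_scope.

(* Fix a coupling nu of P and P' and pull U and W back along the two marginals to
   kernels on T x T'; their row integrals are the degrees of U and of W. On the set S
   where the U-degree is at most lam but the W-degree exceeds lam + eps, integrating
   both kernels over S x (T x T') gives eps nu(S) <= c, where c bounds the cut value
   of nu. Hence D_U(lam) <= D_W(lam + eps) + c/eps, and symmetrically. Choosing
   eps > sqrt(delta) and nu with c < eps^2 makes c/eps <= eps, which gives even
   d_LP(D_U, D_W) <= sqrt(delta). *)

Section extended_real_facts.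
Context d (X : measurableType d) (R : realType).
Implicit Types (f : X -> \bar R) (r : R).

Lemma measurable_lee_cst f r : measurable_fun setT f -> measurable [set x | f x <= r%:E].
Proof.
by move=> mf; rewrite -(setTI [set x | _]); apply: measurable_lee => //; exact: measurable_cst.
Qed.

Lemma measurable_cst_lte f r : measurable_fun setT f -> measurable [set x | r%:E < f x].
Proof.
by move=> mf; rewrite -(setTI [set x | _]); apply: measurable_lte => //; exact: measurable_cst.
Qed.

Lemma measurable_fine_le f r :
  measurable_fun setT f -> measurable [set x | (fine (f x) <= r)%R].
Proof.
move=> mf; have mff : measurable_fun setT (fine \o f).
  exact: measurableT_comp (fine_measurable measurableT) mf.
by have := mff measurableT _ (measurable_itv `]-oo, r]); rewrite setTI.
Qed.

Lemma abseB_le_fin_num (x y : \bar R) r : x \is a fin_num -> y \is a fin_num ->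
  `|x - y| <= r%:E -> y <= x + r%:E /\ x <= y + r%:E.
Proof.
move=> fx fy; rewrite -(fineK fx) -(fineK fy) -EFinB abse_EFin -!EFinD !lee_fin.
by rewrite ler_norml => /andP[]; split; lra.
Qed.

End extended_real_facts.

Lemma ge0_integral_setXT d1 d2 (X1 : measurableType d1) (X2 : measurableType d2)
  (R : realType) (m1 : {sigma_finite_measure set X1 -> \bar R})
  (m2 : {sigma_finite_measure set X2 -> \bar R}) (F : X1 * X2 -> \bar R) (S : set X1) :
  measurable_fun setT F -> (forall p, 0 <= F p) -> measurable S ->
  \int[m1 \x m2]_(p in S `*` setT) F p = \int[m1]_(x in S) \int[m2]_y F (x, y).
Proof.
move=> mF F0 mS.
have mST : measurable (S `*` [set: X2]) by exact: measurableX.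
rewrite integral_mkcond fubini_tonelli1.
- rewrite [RHS]integral_mkcond; apply: eq_integral => x _.
  rewrite /fubini_F /patch; case: ifPn => xS.
    apply: eq_integral => y _; rewrite ifT // inE; split=> //.
    by move: xS; rewrite inE.
  rewrite (eq_integral (cst 0)) ?integral0// => y _.
  rewrite ifF //; apply/negbTE; apply: contra xS; rewrite !inE; by case.
- by apply/(measurable_restrictT _ _).1 => //; exact: measurable_funTS.
- by move=> p; rewrite /patch; case: ifP.
Qed.

Section sublevel_shift.
Context d (X : measurableType d) (R : realType) (mu : {measure set X -> \bar R}).
Variables (a b : X -> \bar R) (c : R).
Hypotheses (ma : measurable_fun setT a) (mb : measurable_fun setT b)
  (a0 : forall x, 0 <= a x) (b0 : forall x, 0 <= b x) (ib : \int[mu]_x b x < +oo)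
  (le_ba : forall S, measurable S ->
     \int[mu]_(x in S) b x <= \int[mu]_(x in S) a x + c%:E).

Lemma measure_sublevel_gap (lam eps : R) : (0 < eps)%R ->
  mu ([set x | a x <= lam%:E] `&` [set x | (lam + eps)%:E < b x]) <= (c / eps)%:E.
Proof.
move=> eps0; set S := _ `&` _.
have mS : measurable S.
  by apply: measurableI; [exact: measurable_lee_cst|exact: measurable_cst_lte].
have c0 : (0 <= c)%R.
  by have := le_ba measurable0; rewrite !integral_set0 add0e lee_fin.
have [->|/set0P[x0 [ax0 _]]] := eqVneq S set0.
  by rewrite measure0 lee_fin divr_ge0// ltW.
have lam0 : (0 <= lam)%R by rewrite -lee_fin (le_trans (a0 x0)).
have int_a : \int[mu]_(x in S) a x <= lam%:E * mu S.
  rewrite -integral_cst//; apply: ge0_le_integral => //.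
  - exact: measurable_funTS.
  - by move=> x [].
have int_b : (lam + eps)%:E * mu S <= \int[mu]_(x in S) b x.
  rewrite -integral_cst//; apply: ge0_le_integral => //.
  - by move=> x _; rewrite /= lee_fin; lra.
  - exact: measurable_funTS.
  - by move=> x [] _ /ltW.
have fin_b : \int[mu]_(x in S) b x \is a fin_num.
  rewrite ge0_fin_numE ?integral_ge0//; apply: le_lt_trans ib.
  exact: ge0_subset_integral.
have fin_S : mu S \is a fin_num.
  rewrite ge0_fin_numE// ltNge leye_eq; apply/negP => /eqP muS.
  have lam_eps0 : (0 < lam + eps)%R by lra.
  move: int_b; rewrite muS gt0_muley// leye_eq => /eqP int_b.
  by rewrite int_b in fin_b.
have fin_a : \int[mu]_(x in S) a x \is a fin_num.
  rewrite ge0_fin_numE ?integral_ge0//; apply: le_lt_trans int_a _.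
  by rewrite -(fineK fin_S) -EFinM ltry.
have := le_ba mS; move: int_a int_b.
rewrite -(fineK fin_a) -(fineK fin_b) -(fineK fin_S) -!EFinM -EFinD !lee_fin.
by move=> ? ? ?; rewrite ler_pdivlMr//; nra.
Qed.

Lemma measure_sublevel_le_shift (lam eps : R) : (0 < eps)%R ->
  mu [set x | a x <= lam%:E] <= mu [set x | b x <= (lam + eps)%:E] + (c / eps)%:E.
Proof.
move=> eps0.
pose G := [set x | a x <= lam%:E] `&` [set x | (lam + eps)%:E < b x].
have sub : [set x | a x <= lam%:E] `<=` [set x | b x <= (lam + eps)%:E] `|` G.
  by move=> x ax; have [|] := leP (b x) (lam + eps)%:E; [left|right].
have mG : measurable G.
  by apply: measurableI; [exact: measurable_lee_cst|exact: measurable_cst_lte].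
apply: le_trans (le_measure _ _ _ sub) _; rewrite ?inE.
- exact: measurable_lee_cst.
- by apply: measurableU => //; exact: measurable_lee_cst.
apply: le_trans (measureU2 _ _ _) _ => //; first exact: measurable_lee_cst.
by rewrite leeD2l// measure_sublevel_gap.
Qed.

End sublevel_shift.

Definition measure_preserving d1 d2 (X : measurableType d1) (Y : measurableType d2)
  (R : realType) (mu : {measure set X -> \bar R}) (Q : {measure set Y -> \bar R})
  (pi : X -> Y) : Prop :=
  measurable_fun setT pi /\ forall A, measurable A -> mu (pi @^-1` A) = Q A.

Section measure_preserving_map.
Context d1 d2 (X : measurableType d1) (Y : measurableType d2) (R : realType)
  (mu : {measure set X -> \bar R}) (Q : {measure set Y -> \bar R}) (pi : X -> Y).
Hypothesis pi_preserving : measure_preserving mu Q pi.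

Lemma ge0_integral_measure_preserving (h : Y -> \bar R) :
  measurable_fun setT h -> (forall y, 0 <= h y) ->
  \int[mu]_x h (pi x) = \int[Q]_y h y.
Proof.
move=> mh h0; have [mpi preimE] := pi_preserving.
rewrite [RHS](eq_measure_integral (pushforward mu pi)).
  by rewrite [RHS]ge0_integral_pushforward// preimage_setT.
by move=> A mA _; rewrite -preimE.
Qed.

Lemma measure_preserving_sublevel (g : Y -> \bar R) (r : R) : measurable_fun setT g ->
  mu [set x | g (pi x) <= r%:E] = Q [set y | g y <= r%:E].
Proof.
have [mpi preimE] := pi_preserving.
by move=> mg; rewrite -preimE//; exact: measurable_lee_cst.
Qed.

End measure_preserving_map.

Section integrable_sublevel.
Context d (Y : measurableType d) (R : realType) (Q : {measure set Y -> \bar R}).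
Variable g : Y -> \bar R.
Hypotheses (mg : measurable_fun setT g) (ig : Q.-integrable setT g).

Let mpinfty : measurable [set y | g y = +oo].
Proof. by have := mg measurableT (emeasurable_set1 +oo); rewrite setTI. Qed.

Lemma integrable_pinfty_null : Q [set y | g y = +oo] = 0.
Proof.
have [N [mN N0 sub]] := integrable_ae measurableT ig.
apply/(negligibleP _ mpinfty); exists N; split => // y /= gy; apply: sub => /=.
by move/(_ I); rewrite gy.
Qed.

(* [degree] is defined through [fine], which turns an infinite degree into 0; this
   only happens on a null set. *)
Lemma integrable_fine_sublevel (r : R) : (forall y, 0 <= g y) ->
  Q [set y | (fine (g y) <= r)%R] = Q [set y | g y <= r%:E].
Proof.
move=> g0.
have mfine := measurable_fine_le r mg.
have mle := measurable_lee_cst r mg.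
apply/eqP; rewrite eq_le; apply/andP; split; last first.
  apply: le_measure; rewrite ?inE// => y /= gy.
  have fy : g y \is a fin_num by rewrite ge0_fin_numE// (le_lt_trans gy) ?ltry.
  by rewrite -lee_fin fineK.
have sub : [set y | (fine (g y) <= r)%R] `<=` [set y | g y <= r%:E] `|` [set y | g y = +oo].
  move=> y /= gy; have [->|gyoo] := eqVneq (g y) +oo; [by right|left].
  have fy : g y \is a fin_num by rewrite ge0_fin_numE// ltey.
  by rewrite -(fineK fy) lee_fin.
apply: le_trans (le_measure _ _ _ sub) _; rewrite ?inE//; first exact: measurableU.
have U2 : Q ([set y | g y <= r%:E] `|` [set y | g y = +oo])
    <= Q [set y | g y <= r%:E] + Q [set y | g y = +oo] by exact: measureU2.
by rewrite integrable_pinfty_null adde0 in U2.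
Qed.

End integrable_sublevel.

Definition pullback d1 d2 (X : measurableType d1) (Y : measurableType d2) (R : realType)
  (pi : X -> Y) (V : Y -> Y -> R) (p : X * X) : \bar R :=
  (V (pi p.1) (pi p.2))%:E.

Section graphon_pullback.
Context (R : realType) d (X : measurableType d) (nu : probability X R)
  d0 (Y : measurableType d0) (Q : probability Y R) (pi : X -> Y) (V : Y -> Y -> R).
Hypotheses (pi_preserving : measure_preserving nu Q pi)
  (gV : graphon Q V) (nV : normalized Q V).

Let mV : measurable_fun setT (fun p : Y * Y => (V p.1 p.2)%:E).
Proof. by case: gV => mV _ _ _; exact/measurable_EFinP. Qed.

Let V0 (p : Y * Y) : 0 <= (V p.1 p.2)%:E.
Proof. by case: gV => _ _ V0 _; rewrite lee_fin. Qed.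

Let degree_ge0 y : 0 <= \int[Q]_y' (V y y')%:E.
Proof. by apply: integral_ge0 => y' _; exact: (V0 (y, y')). Qed.

Lemma measurable_pullback : measurable_fun setT (pullback pi V).
Proof.
have [mpi _] := pi_preserving.
apply: measurableT_comp mV (measurable_fun_pair _ _).
- exact: measurableT_comp mpi measurable_fst.
- exact: measurableT_comp mpi measurable_snd.
Qed.

Lemma pullback_ge0 p : 0 <= pullback pi V p.
Proof. exact: (V0 (pi p.1, pi p.2)). Qed.

Lemma measurable_degree : measurable_fun setT (fun y => \int[Q]_y' (V y y')%:E).
Proof. exact: (measurable_fun_fubini_tonelli_F _ mV V0). Qed.

Lemma integral_degree : \int[Q]_y \int[Q]_y' (V y y')%:E = 1.
Proof. by rewrite -nV (fubini_tonelli1 _ mV V0). Qed.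

Lemma fubini_F_pullback :
  fubini_F nu (pullback pi V) = fun x => \int[Q]_y (V (pi x) y)%:E.
Proof.
apply/funext => x; rewrite /fubini_F /pullback /=.
apply: (ge0_integral_measure_preserving pi_preserving (h := fun y => (V (pi x) y)%:E)).
- exact: (measurable_fun_pair2 (pi x) mV).
- by move=> y; exact: (V0 (pi x, y)).
Qed.

Lemma integral_pullback : \int[nu \x nu]_p pullback pi V p = 1.
Proof.
rewrite (fubini_tonelli1 _ measurable_pullback pullback_ge0) fubini_F_pullback.
by rewrite (ge0_integral_measure_preserving pi_preserving measurable_degree) ?integral_degree.
Qed.

Lemma integral_pullback_le1 (D : set (X * X)) : measurable D ->
  \int[nu \x nu]_(p in D) pullback pi V p <= 1.
Proof.
move=> mD; rewrite -integral_pullback.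
apply: ge0_subset_integral => //; first exact: measurable_pullback.
by move=> p _; exact: pullback_ge0.
Qed.

Lemma integrable_pullback : (nu \x nu).-integrable setT (pullback pi V).
Proof.
apply/integrableP; split; first exact: measurable_pullback.
under eq_integral do rewrite gee0_abs ?pullback_ge0//.
by rewrite integral_pullback ltry.
Qed.

Lemma pullback_degree_dist (lam : R) :
  (degree_dist Q V lam)%:E = nu [set x | fubini_F nu (pullback pi V) x <= lam%:E].
Proof.
have idegree : Q.-integrable setT (fun y => \int[Q]_y' (V y y')%:E).
  apply/integrableP; split; first exact: measurable_degree.
  under eq_integral do rewrite gee0_abs//.
  by rewrite integral_degree ltry.
rewrite fubini_F_pullback.
rewrite (measure_preserving_sublevel pi_preserving _ measurable_degree).
rewrite -(integrable_fine_sublevel measurable_degree idegree _ degree_ge0).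
rewrite /degree_dist /degree fineK// ge0_fin_numE//.
rewrite (le_lt_trans (probability_le1 _ _)) ?ltry//.
exact: measurable_fine_le measurable_degree.
Qed.

End graphon_pullback.

Lemma degree_dist_le_shift (R : realType) d (X : measurableType d) (nu : probability X R)
  d1 (Y1 : measurableType d1) (Q1 : probability Y1 R) (pi1 : X -> Y1) (V1 : Y1 -> Y1 -> R)
  d2 (Y2 : measurableType d2) (Q2 : probability Y2 R) (pi2 : X -> Y2) (V2 : Y2 -> Y2 -> R)
  (c lam eps : R) :
  measure_preserving nu Q1 pi1 -> graphon Q1 V1 -> normalized Q1 V1 ->
  measure_preserving nu Q2 pi2 -> graphon Q2 V2 -> normalized Q2 V2 ->
  (forall S, measurable S ->
     \int[nu \x nu]_(p in S `*` setT) pullback pi2 V2 p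
       <= \int[nu \x nu]_(p in S `*` setT) pullback pi1 V1 p + c%:E) ->
  (0 < eps)%R ->
  (degree_dist Q1 V1 lam <= degree_dist Q2 V2 (lam + eps) + c / eps)%R.
Proof.
move=> mp1 gV1 nV1 mp2 gV2 nV2 le21 eps0.
have mV1 := measurable_pullback mp1 gV1; have mV2 := measurable_pullback mp2 gV2.
have V1_0 := pullback_ge0 pi1 gV1; have V2_0 := pullback_ge0 pi2 gV2.
rewrite -lee_fin EFinD (pullback_degree_dist mp1 gV1 nV1).
rewrite (pullback_degree_dist mp2 gV2 nV2).
apply: measure_sublevel_le_shift => //.
- exact: measurable_fun_fubini_tonelli_F.
- exact: measurable_fun_fubini_tonelli_F.
- by move=> x; apply: integral_ge0.
- by move=> x; apply: integral_ge0.
- by rewrite -fubini_tonelli1// (integral_pullback mp2 gV2 nV2) ltry.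
- by move=> S mS; rewrite -!ge0_integral_setXT//; exact: le21.
Qed.

Section coupling_graphons.
Context (R : realType) d d' (T : measurableType d) (T' : measurableType d')
  (P : probability T R) (P' : probability T' R).

Lemma coupling_fst (nu : probability (T * T')%type R) :
  coupling P P' nu -> measure_preserving nu P fst.
Proof.
move=> [nuP _]; split=> [|A mA]; first exact: measurable_fst.
by rewrite -setXT; exact: nuP.
Qed.

Lemma coupling_snd (nu : probability (T * T')%type R) :
  coupling P P' nu -> measure_preserving nu P' snd.
Proof.
move=> [_ nuP']; split=> [|A mA]; first exact: measurable_snd.
have -> : snd @^-1` A = [set: T] `*` A by apply/seteqP; split=> -[x y] //= [].
exact: nuP'.
Qed.

Lemma product_coupling : coupling P P' (P \x P')%E.
Proof.
split=> A mA /=; rewrite product_measure1E//.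
- by rewrite -[RHS]mule1; congr (_ * _); exact: probability_setT.
- by rewrite -[RHS]mul1e; congr (_ * _); exact: probability_setT.
Qed.

Lemma cut_sup_ge0 (nu : probability (T * T')%type R) U W : 0 <= cut_sup nu U W.
Proof.
apply: le_trans (ereal_sup_ubound _); last by exists set0, set0; split.
by rewrite set0X integral_set0 abse0.
Qed.

Variables (U : T -> T -> R) (W : T' -> T' -> R).
Hypotheses (gU : graphon P U) (nU : normalized P U) (gW : graphon P' W) (nW : normalized P' W).

Lemma coupling_cut_integrand (nu : probability (T * T')%type R)
    (D : set ((T * T') * (T * T'))%type) :
  coupling P P' nu -> measurable D ->
  \int[nu \x nu]_(z in D) ((U z.1.1 z.2.1 - W z.1.2 z.2.2)%:E)
  = \int[nu \x nu]_(z in D) pullback fst U z - \int[nu \x nu]_(z in D) pullback snd W z.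
Proof.
move=> cpl mD; rewrite -integralB//.
- exact: integrableS (integrable_pullback (coupling_fst cpl) gU nU).
- exact: integrableS (integrable_pullback (coupling_snd cpl) gW nW).
Qed.

Lemma cut_sup_le2 (nu : probability (T * T')%type R) :
  coupling P P' nu -> cut_sup nu U W <= 2%:E.
Proof.
move=> cpl; apply: ge_ereal_sup => _ [S [S' [mS mS' ->]]].
have mSS : measurable (S `*` S') by exact: measurableX.
rewrite coupling_cut_integrand//.
have leU := integral_pullback_le1 (coupling_fst cpl) gU nU mSS.
have leW := integral_pullback_le1 (coupling_snd cpl) gW nW mSS.
have geU : 0 <= \int[nu \x nu]_(z in S `*` S') pullback fst U z.
  by apply: integral_ge0 => z _; rewrite lee_fin; case: gU.
have geW : 0 <= \int[nu \x nu]_(z in S `*` S') pullback snd W z.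
  by apply: integral_ge0 => z _; rewrite lee_fin; case: gW.
have finU : \int[nu \x nu]_(z in S `*` S') pullback fst U z \is a fin_num.
  by rewrite ge0_fin_numE// (le_lt_trans leU) ?ltry.
have finW : \int[nu \x nu]_(z in S `*` S') pullback snd W z \is a fin_num.
  by rewrite ge0_fin_numE// (le_lt_trans leW) ?ltry.
move: leU leW geU geW; rewrite -(fineK finU) -(fineK finW) -EFinB abse_EFin !lee_fin.
by move=> *; rewrite ler_norml; apply/andP; split; lra.
Qed.

Lemma coupling_cut_bound (nu : probability (T * T')%type R) (c : R) :
  coupling P P' nu -> cut_sup nu U W <= c%:E -> forall S, measurable S ->
  \int[nu \x nu]_(p in S `*` setT) pullback snd W p
    <= \int[nu \x nu]_(p in S `*` setT) pullback fst U p + c%:E /\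
  \int[nu \x nu]_(p in S `*` setT) pullback fst U p
    <= \int[nu \x nu]_(p in S `*` setT) pullback snd W p + c%:E.
Proof.
move=> cpl cut_c S mS; have mST : measurable (S `*` [set: T * T']) by exact: measurableX.
have iU := integrable_pullback (coupling_fst cpl) gU nU.
have iW := integrable_pullback (coupling_snd cpl) gW nW.
apply: abseB_le_fin_num.
- exact: integrable_fin_num (integrableS _ _ _ iU).
- exact: integrable_fin_num (integrableS _ _ _ iW).
rewrite -coupling_cut_integrand//; apply: le_trans cut_c.
by apply: ereal_sup_ubound; exists S, setT.
Qed.

Lemma cut_dist_approx (e : R) : (cut_dist P P' U W < e)%R ->
  exists2 nu : probability (T * T')%type R, coupling P P' nu & cut_sup nu U W < e%:E.
Proof.
rewrite /cut_dist; set E := ereal_inf _ => lt_e.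
have E_le2 : E <= 2%:E.
  apply: le_trans (cut_sup_le2 product_coupling).
  by apply: ereal_inf_lbound; exists (P \x P')%E; split=> //; exact: product_coupling.
have E_ge0 : 0 <= E by apply: le_ereal_inf_tmp => _ [nu [_ ->]]; exact: cut_sup_ge0.
have finE : E \is a fin_num by rewrite ge0_fin_numE// (le_lt_trans E_le2) ?ltry.
have : E < e%:E by rewrite -(fineK finE) lte_fin.
by move=> /ereal_inf_lt[_ [nu [cpl ->]] lt_nu]; exists nu.
Qed.

End coupling_graphons.

Lemma cut_dist_ge0 (R : realType) d d' (T : measurableType d) (T' : measurableType d')
  (P : probability T R) (P' : probability T' R) (U : T -> T -> R) (W : T' -> T' -> R) :
  (0 <= cut_dist P P' U W)%R.
Proof. by apply: fine_ge0; apply: le_ereal_inf_tmp => _ [nu [_ ->]]; exact: cut_sup_ge0. Qed.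

Lemma d_LP_le (R : realType) (D D' : R -> R) (r : R) : (0 <= r)%R ->
  (forall eps, (r < eps)%R -> forall lam,
     (D' (lam - eps) - eps <= D lam)%R /\ (D lam <= D' (lam + eps) + eps)%R) ->
  (d_LP D D' <= r)%R.
Proof.
move=> r0 near_eps; apply/ler_addgt0Pr => e e0.
apply: ge_inf; first by exists 0%R => y [y0 _]; exact: ltW.
split; first by rewrite ltr_wpDl.
by apply: near_eps; rewrite ltrDl.
Qed.

Local Close Scope ereal_scope.

Theorem theorem2p16 (R : realType) (d d' : measure_display)
  (T : measurableType d) (T' : measurableType d')
  (P : probability T R) (P' : probability T' R)
  (U : T -> T -> R) (W : T' -> T' -> R) :
  graphon P U -> normalized P U ->
  graphon P' W -> normalized P' W ->
  d_LP (degree_dist P U) (degree_dist P' W)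
    <= Num.sqrt (2 * cut_dist P P' U W).
Proof.
move=> gU nU gW nW.
have dist0 := cut_dist_ge0 P P' U W.
apply: le_trans (ler_wsqrtr (_ : cut_dist P P' U W <= 2 * cut_dist P P' U W)); last by lra.
apply: d_LP_le => [|eps lt_eps lam]; first exact: sqrtr_ge0.
have eps0 : 0 < eps by apply: le_lt_trans lt_eps; exact: sqrtr_ge0.
have dist_lt : cut_dist P P' U W < eps ^+ 2.
  by rewrite -ltr_sqrt ?exprn_gt0// sqrtr_sqr gtr0_norm.
have [nu cpl cut_lt] := cut_dist_approx gU nU gW nW dist_lt.
have fin_cut : cut_sup nu U W \is a fin_num.
  by rewrite ge0_fin_numE ?cut_sup_ge0// (lt_trans cut_lt) ?ltry.
have cut_c : (cut_sup nu U W <= (fine (cut_sup nu U W))%:E)%E by rewrite fineK.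
have c_eps : fine (cut_sup nu U W) / eps <= eps.
  by rewrite ler_pdivrMr// -expr2 ltW// -lte_fin fineK.
have bound := coupling_cut_bound gU nU gW nW cpl cut_c.
have UW := degree_dist_le_shift lam (coupling_fst cpl) gU nU
  (coupling_snd cpl) gW nW (fun S mS => (bound S mS).1) eps0.
have WU := degree_dist_le_shift (lam - eps) (coupling_snd cpl) gW nW
  (coupling_fst cpl) gU nU (fun S mS => (bound S mS).2) eps0.
by rewrite subrK in WU; split; lra.
Qed.
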